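(* Let $(T(t))_{t\ge0}$ be a bounded $C_0$-semigroup on a Banach space $E$, and let $t_1,\dots,t_n>0$. Then $$E_{\mathrm{aap}}\cap\ker(T(t_1)-\mathrm{Id})\cdots(T(t_n)-\mathrm{Id})=\ker(T(t_1)-\mathrm{Id})+\cdots+\ker(T(t_n)-\mathrm{Id}).$$
   Context: $E_{\mathrm{aap}}$ is the set of asymptotically almost periodic vectors, i.e. those $x\in E$ whose orbit $\{T(t)x:t\ge0\}$ is relatively compact in $E$. *)

From HB Require Import structures.
From mathcomp Require Import all_boot all_order all_algebra.
From mathcomp Require Import all_classical all_reals all_analysis.
Set Implicit Arguments. Unset Strict Implicit. Unset Printing Implicit Defensive.
Import Order.TTheory GRing.Theory Num.Theory.
Import numFieldNormedType.Exports.
Local Open Scope classical_set_scope.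
Local Open Scope ring_scope.

Definition C0_semigroup (R : realType) (E : normedModType R)
  (T : R -> {linear E -> E}) : Prop :=
  [/\ (forall x, T 0 x = x),
      (forall s t, 0 <= s -> 0 <= t -> forall x, T (s + t) x = T s (T t x)),
      (forall t, 0 <= t -> exists M : R, forall x, `|T t x| <= M * `|x|) &
      (forall x, (fun t => T t x) @ 0^'+ --> x)].

Definition bounded_semigroup (R : realType) (E : normedModType R)
  (T : R -> {linear E -> E}) : Prop :=
  exists M : R, forall t, 0 <= t -> forall x, `|T t x| <= M * `|x|.

Definition orbit (R : realType) (E : normedModType R)
  (T : R -> {linear E -> E}) (x : E) : set E :=
  [set T t x | t in [set t : R | 0 <= t]].

Definition E_aap (R : realType) (E : normedModType R)
  (T : R -> {linear E -> E}) : set E :=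
  [set x | compact (closure (orbit T x))].

Definition prod_TmI (R : realType) (E : normedModType R)
  (T : R -> {linear E -> E}) (ts : seq R) : E -> E :=
  foldr (fun t g => (fun y => T t y - y) \o g) id ts.

Definition ker_TmI (R : realType) (E : normedModType R)
  (T : R -> {linear E -> E}) (t : R) : set E :=
  [set x | T t x - x = 0].

From Pilot Require Import Defs.
From HB Require Import structures.
From mathcomp Require Import all_boot all_order all_algebra.
From mathcomp Require Import all_classical all_reals all_analysis.
Import Order.TTheory GRing.Theory Num.Theory.
Import numFieldNormedType.Exports.
Local Open Scope classical_set_scope.
Local Open Scope ring_scope.

(* Sums of periodic vectors are asymptotically almost periodic, since a periodic
   orbit is the continuous image of a compact period interval, and they are
   annihilated by the product because its factors commute.  Conversely, let x be
   asymptotically almost periodic and y := (T(t_2) - Id)...(T(t_n) - Id) x be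
   t_1-periodic.  The Cesaro means of (T(k t_1) x)_k are totally bounded, since
   they are close to convex combinations of a finite net of the orbit, so in the
   complete space E they have a cluster point z.  This z is t_1-periodic, and as
   every mean is mapped to y by the remaining product, so is z.  Hence x - z
   satisfies the hypothesis with the factor T(t_1) - Id removed; induct on n. *)

Lemma ultra_finite_union {I : Type} {G : set_system I} {m : nat}
    (A : 'I_m -> set I) :
  UltraFilter G -> G [set x | exists i, A i x] -> exists i, G (A i).
Proof.
move=> GU; elim: m A => [|m IH] A GA.
  by exfalso; apply: (filter_not_empty G); apply: filterS GA => x [[]].
have [|GAc] := in_ultra_setVsetC (A ord0) GU; first by exists ord0.
have [i Gi] : exists i, G (A (lift ord0 i)).
  apply: IH; apply: filterS (filterI GA GAc) => x [[i Ai] nA0].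
  case: (unliftP ord0 i) Ai => [j -> Aj|-> //]; by exists j.
by exists (lift ord0 i).
Qed.

Lemma cluster_continuous_cvg {I : Type} {X Y : topologicalType}
    {F : set_system I} {FF : Filter F} {a : I -> X} (L : X -> Y)
    {z : X} {c : Y} :
  hausdorff_space Y -> cluster (a @ F) z -> {for z, continuous L} ->
  (L \o a) @ F --> c -> L z = c.
Proof.
move=> Yhaus; rewrite cluster_cvgE => -[G PG [Gz aFG]] Lz Lac.
have LGz : L @ G --> L z := cvg_comp _ _ Gz Lz.
have LGc : L @ G --> c by apply: cvg_trans _ Lac => A; apply: aFG.
exact: cvg_unique LGz LGc.
Qed.

Section TotallyBoundedSequences.
Context {R : realType} {E : normedModType R}.

Definition totally_bounded_seq (a : nat -> E) := forall e, 0 < e ->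
  exists m (F : 'I_m -> E), forall N, exists i, `|a N - F i| < e.

Lemma compact_totally_bounded_seq {K : set E} {a : nat -> E} :
  compact K -> (forall N, K (a N)) -> totally_bounded_seq a.
Proof.
rewrite compact_cover => cK Ka e e0.
have [D _ cov] := cK E K (ball^~ e) (fun f _ => ball_open f e)
  (fun y Ky => ex_intro2 _ (fun f => ball f e y) y Ky (ballxx y e0)).
pose s := finmap.enum_fset D.
exists (size s), (fun i => nth 0 s i) => N.
have [f fD aNf] := cov _ (Ka N).
have fs : f \in s by [].
have fsize : (index f s < size s)%N by rewrite index_mem.
exists (Ordinal fsize); rewrite /= nth_index //.
by move: aNf; rewrite -ball_normE /= distrC.
Qed.

Definition cesaro_mean (a : nat -> E) (N : nat) : E :=
  N.+1%:R^-1 *: \sum_(k < N.+1) a k.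

Lemma compact_convex_combinations {m : nat} (F : 'I_m -> E) :
  compact [set \sum_(i < m) v ord0 i *: F i |
           v in [set v : 'rV[R]_m | forall i, `[0, 1]%classic (v ord0 i)]].
Proof.
apply: continuous_compact.
  apply: continuous_subspaceT => v.
  apply: (@continuous_big _ _ +%R 0 xpredT add_continuous) => i _ w.
  apply: (continuousZr_tmp (s := fun u : 'rV[R]_m => u ord0 i)).
  exact: coord_continuous.
exact: (rV_compact (fun=> @segment_compact R 0 1)).
Qed.

Lemma totally_bounded_cesaro_mean (a : nat -> E) :
  totally_bounded_seq a -> totally_bounded_seq (cesaro_mean a).
Proof.
(* Each mean is within e/2 of a convex combination of an e/2-net of [a], and
   these combinations form a compact set. *)
move=> tba e e0; have e2 : 0 < e / 2 by rewrite divr_gt0.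
have [m [F /choice [J aJ]]] := tba _ e2.
pose freq N (i : 'I_m) : R := N.+1%:R^-1 * \sum_(k < N.+1) (J k == i)%:R.
pose c N := \sum_(i < m) freq N i *: F i.
have freq_itv N i : `[0, 1]%classic (freq N i).
  rewrite /= in_itv /= mulr_ge0 ?invr_ge0 ?sumr_ge0 //=.
  rewrite /freq mulrC ler_pdivrMr ?ltr0n // mul1r.
  apply: (@le_trans _ _ (\sum_(k < N.+1) 1)).
    by apply: ler_sum => k _; rewrite lern1 leq_b1.
  by rewrite sumr_const card_ord.
have tb_c : totally_bounded_seq c.
  apply: (compact_totally_bounded_seq (compact_convex_combinations F)) => N.
  exists (\row_i freq N i); first by move=> i; rewrite mxE.
  by apply: eq_bigr => i _; rewrite mxE.
have cE N : c N = N.+1%:R^-1 *: \sum_(k < N.+1) F (J k).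
  rewrite /c; under eq_bigr do rewrite -scalerA scaler_suml.
  rewrite -scaler_sumr exchange_big /=; congr (_ *: _); apply: eq_bigr => k _.
  rewrite (bigD1 (J k)) //= eqxx scale1r big1 ?addr0 // => i.
  by rewrite eq_sym => /negbTE ->; rewrite scale0r.
have mean_c N : `|cesaro_mean a N - c N| <= e / 2.
  rewrite cE /cesaro_mean -scalerBr -sumrB normrZ ger0_norm ?invr_ge0 //.
  rewrite mulrC ler_pdivrMr ?ltr0n //; apply: (le_trans (ler_norm_sum _ _ _)).
  apply: (@le_trans _ _ (\sum_(k < N.+1) e / 2)).
    by apply: ler_sum => k _; apply: ltW.
  by rewrite sumr_const card_ord mulr_natr.
have [m' [G cG]] := tb_c _ e2.
exists m', G => N; have [i ci] := cG N; exists i.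
rewrite -(subrK (c N) (cesaro_mean a N)) -addrA [e]splitr.
exact: le_lt_trans (ler_normD _ _) (ler_ltD (mean_c N) ci).
Qed.

End TotallyBoundedSequences.

Lemma totally_bounded_seq_cluster (R : realType) (E : completeNormedModType R)
    (a : nat -> E) :
  totally_bounded_seq a -> exists z, cluster (a @ \oo) z.
Proof.
move=> tba; have [G [GU ooG]] := ultraFilterLemma (F := \oo) _.
have PG : ProperFilter (a @ G).
  by apply: fmap_proper_filter; exact: ultra_proper.
have /cauchy_cvgP aG_cvg : cauchy (a @ G).
  apply/cauchyP => e e0; have [m [F aF]] := tba e e0.
  have Gnet : G [set N | exists i, ball (F i) e (a N)].
    apply: filterS filterT => N _; have [i aNi] := aF N.
    by exists i; rewrite -ball_normE /= distrC.
  have [i Gi] := ultra_finite_union (fun i N => ball (F i) e (a N)) GU Gnet.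
  by exists (F i).
exists (lim (a @ G)); rewrite cluster_cvgE; exists (a @ G) => //.
by split => // A; apply: ooG.
Qed.

Lemma linear_bound_continuous {R : realType} {U V : normedModType R}
    (f : {linear U -> V}) {C : R} :
  (forall x, `|f x| <= C * `|x|) -> continuous f.
Proof.
move=> fC; apply/bounded_linear_continuous/linear_boundedP.
near=> r => x; rewrite (le_trans (fC x)) // ler_wpM2r //.
Unshelve. all: by end_near. Qed.

Section ProdTmILinear.
Context {R : realType} {E : normedModType R} (T : R -> {linear E -> E}).

Lemma prod_TmI_is_linear ts : linear (prod_TmI T ts).
Proof.
move=> a u v; elim: ts => [//|t ts IH] /=.
by rewrite IH linearP scalerBr opprD addrACA.
Qed.

HB.instance Definition _ ts := GRing.isLinear.Build R E E *:%R (prod_TmI T ts)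
  (prod_TmI_is_linear ts).

End ProdTmILinear.

Section Semigroup.
Context {R : realType} {E : completeNormedModType R} {T : R -> {linear E -> E}}.
Hypothesis T_C0 : C0_semigroup T.
Context {M : R}.
Hypothesis M_ge1 : 1 <= M.
Hypothesis T_bound : forall t, 0 <= t -> forall x, `|T t x| <= M * `|x|.

Let M_gt0 : 0 < M. Proof. exact: lt_le_trans M_ge1. Qed.

Lemma semigroup0 x : T 0 x = x.
Proof. by case: T_C0. Qed.

Lemma semigroupD s t x : 0 <= s -> 0 <= t -> T (s + t) x = T s (T t x).
Proof. by move=> s0 t0; case: T_C0 => _ TD _ _; exact: TD. Qed.

Lemma semigroupC s t x : 0 <= s -> 0 <= t -> T s (T t x) = T t (T s x).
Proof. by move=> s0 t0; rewrite -!semigroupD // addrC. Qed.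

Lemma iter_semigroup p k x : 0 <= p -> iter k (T p) x = T (k%:R * p) x.
Proof.
move=> p0; elim: k => [|k IH]; first by rewrite mul0r semigroup0.
by rewrite iterS IH -semigroupD ?mulr_ge0 // -addn1 natrD mulrDl mul1r addrC.
Qed.

Local Notation nonneg ts := (all (fun t => 0 <= t) ts).

Lemma prod_TmI_semigroupC s ts u : 0 <= s -> nonneg ts ->
  prod_TmI T ts (T s u) = T s (prod_TmI T ts u).
Proof.
move=> s0; elim: ts => [//|t ts IH /andP[t0 /IH {}IH]] /=.
by rewrite IH semigroupC // linearB.
Qed.

Lemma prod_TmI_fixed {s : R} {ts : seq R} {v : E} :
  0 <= s -> s \in ts -> nonneg ts -> T s v = v -> prod_TmI T ts v = 0.
Proof.
move=> s0; elim: ts => [//|t ts IH].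
rewrite inE => /orP[/eqP <-|s_ts] /andP[t0 ts0] Tv /=.
  by rewrite -prod_TmI_semigroupC // Tv subrr.
by rewrite IH // linear0 subrr.
Qed.

Lemma norm_prod_TmI ts : nonneg ts ->
  forall u, `|prod_TmI T ts u| <= (M + 1) ^+ size ts * `|u|.
Proof.
elim: ts => [_ u|t ts IH /andP[t0 /IH {}IH] u] /=; first by rewrite expr0 mul1r.
apply: (le_trans (ler_normB _ _)).
rewrite exprS -mulrA mulrDl mul1r lerD // (le_trans (T_bound _ t0 _)) //.
by rewrite ler_wpM2l // ltW.
Qed.

Lemma continuous_prod_TmI ts : nonneg ts -> continuous (prod_TmI T ts).
Proof. by move=> ts0; exact: linear_bound_continuous (norm_prod_TmI _ ts0). Qed.

Lemma semigroup_right_cont x {e : R} : 0 < e ->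
  exists2 d, 0 < d & forall h, 0 <= h -> h < d -> `|T h x - x| < e.
Proof.
move=> e0; case: T_C0 => _ _ _ /(_ x) /cvgrPdist_lt /(_ e e0) near_x.
have [d /= d0 Hd] := (nbhs_ballP _ _).1 near_x.
exists d => // h h0 hd; have [->|h_neq0] := eqVneq h 0.
  by rewrite semigroup0 subrr normr0.
rewrite distrC; apply: Hd; first by rewrite /ball /= sub0r normrN ger0_norm.
by rewrite lt_def h_neq0.
Qed.

(* [t |-> T t x] is only defined for [t >= 0]; composing with the absolute value
   gives a function that is continuous on all of [R]. *)
Lemma continuous_semigroup_abs x : continuous (fun s : R => T `|s| x).
Proof.
move=> s0; apply/cvgrPdist_lt => e e0.
have [d d0 Td] := semigroup_right_cont x (divr_gt0 e0 M_gt0).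
have T_close a b : 0 <= a -> a <= b -> b - a < d -> `|T a x - T b x| < e.
  move=> a0 ab bad; have ba0 : 0 <= b - a by rewrite subr_ge0.
  rewrite -[b](subrKC a) semigroupD // -linearB.
  rewrite (le_lt_trans (T_bound _ a0 _)) // mulrC -ltr_pdivlMr //.
  by rewrite distrC; exact: Td.
apply/nbhs_ballP; exists d => //= s; rewrite /ball /= => s0s.
have dist_abs : `| `|s0| - `|s| | < d.
  exact: le_lt_trans (ler_dist_dist _ _) s0s.
have [s0_le|s_lt] := leP `|s0| `|s|.
  by apply: T_close => //; apply: le_lt_trans dist_abs; rewrite distrC ler_norm.
rewrite distrC; apply: T_close => //; first exact: ltW.
by apply: le_lt_trans dist_abs; rewrite ler_norm.
Qed.

Lemma periodic_orbit_sub {p : R} {v : E} : 0 < p -> T p v = v ->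
  Defs.orbit T v `<=` [set T `|s| v | s in `[0, p]].
Proof.
move=> p0 Tv _ [s /= s0 <-]; have p_ge0 := ltW p0; pose k := Num.trunc (s / p).
have kp_le : k%:R * p <= s by rewrite -ler_pdivlMr // truncn_le divr_ge0 // ltW.
have s_lt : s < k.+1%:R * p.
  by rewrite -ltr_pdivrMr //; have := leqnn k; rewrite /k truncn_le_nat.
have r0 : 0 <= s - k%:R * p by rewrite subr_ge0.
exists (s - k%:R * p).
  rewrite /= in_itv /= r0 lerBlDr ltW //.
  by rewrite -[p in _ < p + _]mul1r -mulrDl addrC natr1.
rewrite ger0_norm // -[in T s v](subrK (k%:R * p) s).
rewrite (semigroupD _ (k%:R * p)) //.
  by rewrite -iter_semigroup // iter_fix.
by rewrite mulr_ge0.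
Qed.

Lemma periodic_aap {p : R} {v : E} : 0 < p -> T p v = v -> E_aap T v.
Proof.
move=> p0 Tv; rewrite /E_aap /= -precompactE.
apply: precompact_subset (periodic_orbit_sub p0 Tv) _.
apply: compact_precompact; first exact: norm_hausdorff.
apply: continuous_compact; last exact: segment_compact.
exact/continuous_subspaceT/continuous_semigroup_abs.
Qed.

Lemma aapD u v : E_aap T u -> E_aap T v -> E_aap T (u + v).
Proof.
move=> uaap vaap; rewrite /E_aap /= -precompactE.
apply: (@precompact_subset _ _ ((fun z => z.1 + z.2) @`
  (closure (Defs.orbit T u) `*` closure (Defs.orbit T v)))).
  move=> _ [s /= s0 <-]; exists (T s u, T s v); last by rewrite /= linearD.
  by split; apply: subset_closure; exists s.
apply: compact_precompact; first exact: norm_hausdorff.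
apply: continuous_compact; last exact: compact_setX.
exact/continuous_subspaceT/add_continuous.
Qed.

Let cesaro_orbit p x := cesaro_mean (fun k => iter k (T p) x).

Lemma cesaro_orbit_cluster {p : R} {x : E} : 0 <= p -> E_aap T x ->
  exists z, cluster (cesaro_orbit p x @ \oo) z.
Proof.
move=> p0 xaap; apply/totally_bounded_seq_cluster/totally_bounded_cesaro_mean.
apply: (compact_totally_bounded_seq xaap) => k; apply: subset_closure.
by rewrite iter_semigroup //; exists (k%:R * p); rewrite //= mulr_ge0 //.
Qed.

Lemma cesaro_orbit_fixed {p : R} {x z : E} : 0 <= p ->
  cluster (cesaro_orbit p x @ \oo) z -> T p z = z.
Proof.
move=> p0 zcl; apply/subr0_eq.
have p_nonneg : nonneg [:: p] by rewrite /= p0.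
apply: (cluster_continuous_cvg (prod_TmI T [:: p]) (@norm_hausdorff _ E) zcl).
  exact: continuous_prod_TmI.
have telescope N : prod_TmI T [:: p] (cesaro_orbit p x N) =
    harmonic N *: (iter N.+1 (T p) x - x).
  rewrite /= /cesaro_orbit /cesaro_mean linearZ linear_sum /= -scalerBr -sumrB.
  rewrite -(big_mkord xpredT (fun k => iter k.+1 (T p) x - iter k (T p) x)).
  by rewrite telescope_sumr.
apply/norm_cvg0P; apply: (@squeeze_cvgr _ _ _ _ (cst 0)
  (fun N => harmonic N * ((M + 1) * `|x|))); last 2 first.
- exact: cvg_cst.
- rewrite -[0](mul0r ((M + 1) * `|x|)).
  by apply: cvgMr_tmp; exact: cvg_harmonic.
near=> N; rewrite /cst /comp normr_ge0 telescope normrZ ger0_norm //=.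
rewrite ler_pM2l ?harmonic_gt0 // (le_trans (ler_normB _ _)) // mulrDl mul1r.
by rewrite lerD2r -iterS iter_semigroup // T_bound // mulr_ge0.
Unshelve. all: by end_near. Qed.

Lemma cesaro_orbit_prod_TmI {p : R} {x z : E} {ts : seq R} :
  0 <= p -> nonneg ts -> T p (prod_TmI T ts x) = prod_TmI T ts x ->
  cluster (cesaro_orbit p x @ \oo) z -> prod_TmI T ts z = prod_TmI T ts x.
Proof.
move=> p0 ts0 Px_fixed zcl.
apply: (cluster_continuous_cvg (prod_TmI T ts) (@norm_hausdorff _ E) zcl).
  exact: continuous_prod_TmI.
suff -> : prod_TmI T ts \o cesaro_orbit p x = cst (prod_TmI T ts x).
  exact: cvg_cst.
apply/funext => N; rewrite /= linearZ linear_sum /=.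
under eq_bigr => k _ do rewrite iter_semigroup // prod_TmI_semigroupC
  ?mulr_ge0 // -iter_semigroup // iter_fix //.
rewrite sumr_const card_ord -[X in _ *: X]scaler_nat scalerA.
by rewrite mulVf ?scale1r // pnatr_eq0.
Qed.

Lemma aap_prod_TmI_decomposition n (t : 'I_n -> R) x : (forall i, 0 < t i) ->
  E_aap T x -> prod_TmI T [seq t i | i <- enum 'I_n] x = 0 ->
  exists xs : 'I_n -> E,
    (forall i, ker_TmI T (t i) (xs i)) /\ x = \sum_(i < n) xs i.
Proof.
elim: n t x => [|n IH] t x t_gt0 xaap.
  rewrite enum_ord0 => /= ->.
  by exists (fun=> 0); split => [[] //|]; rewrite big_ord0.
rewrite enum_ordSl /= -map_comp /comp; set ts := map _ _ => Px.
have p0 := t_gt0 ord0; set p := t ord0 in p0 Px *.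
have ts0 : nonneg ts by apply/allP => _ /mapP [i _ ->]; exact/ltW/t_gt0.
have [z zcl] := cesaro_orbit_cluster (ltW p0) xaap.
have Tz := cesaro_orbit_fixed (ltW p0) zcl.
have Pz := cesaro_orbit_prod_TmI (ltW p0) ts0 (subr0_eq Px) zcl.
have [xs [xs_ker x_z]] : exists xs : 'I_n -> E,
    (forall i, ker_TmI T (t (lift ord0 i)) (xs i)) /\ x - z = \sum_(i < n) xs i.
  apply: IH => [i||]; first exact: t_gt0.
    by apply: aapD xaap (periodic_aap p0 _); rewrite linearN Tz.
  by rewrite -/ts linearB /= Pz subrr.
exists (fun i => if unlift ord0 i is Some j then xs j else z); split.
  move=> i; case: (unliftP ord0 i) => [j ->|->]; first exact: xs_ker.
  by rewrite /ker_TmI /= Tz subrr.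
rewrite big_ord_recl unlift_none; under eq_bigr do rewrite liftK.
by rewrite -x_z addrC subrK.
Qed.

Lemma sum_periodic_aap_ker n (t : 'I_n -> R) (xs : 'I_n -> E) :
  (forall i, 0 < t i) -> (forall i, ker_TmI T (t i) (xs i)) ->
  E_aap T (\sum_(i < n) xs i) /\
  prod_TmI T [seq t i | i <- enum 'I_n] (\sum_(i < n) xs i) = 0.
Proof.
move=> t_gt0 xs_ker.
have Txs i : T (t i) (xs i) = xs i by exact/subr0_eq/xs_ker.
split.
  apply: big_ind => [||i _]; [exact: (periodic_aap ltr01 (linear0 _)) | |].
    exact: aapD.
  exact: periodic_aap (t_gt0 i) (Txs i).
rewrite linear_sum big1 // => i _.
apply: prod_TmI_fixed (ltW (t_gt0 i)) _ _ (Txs i).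
  by apply: map_f; rewrite mem_enum.
by apply/allP => _ /mapP [j _ ->]; exact/ltW/t_gt0.
Qed.

End Semigroup.

Theorem lemma2p3 (R : realType) (E : completeNormedModType R)
  (T : R -> {linear E -> E}) (n : nat) (t : 'I_n -> R) :
  C0_semigroup T -> bounded_semigroup T -> (forall i, 0 < t i) ->
  E_aap T `&` [set x | prod_TmI T [seq t i | i <- enum 'I_n] x = 0] =
  [set x | exists xs : 'I_n -> E,
      (forall i, ker_TmI T (t i) (xs i)) /\ x = \sum_(i < n) xs i].
Proof.
move=> T_C0 [M0 T_bound0] t_gt0.
pose M := Num.max M0 1.
have M_ge1 : 1 <= M by rewrite le_max lexx orbT.
have T_bound t' : 0 <= t' -> forall x, `|T t' x| <= M * `|x|.
  move=> t0 x; rewrite (le_trans (T_bound0 _ t0 x)) //.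
  by rewrite ler_wpM2r // le_max lexx.
apply/seteqP; split => x /=.
  by move=> [xaap Px]; apply: (aap_prod_TmI_decomposition T_C0 M_ge1 T_bound).
move=> [xs [xs_ker ->]].
exact: (sum_periodic_aap_ker T_C0 M_ge1 T_bound).
Qed.
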